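(* Let $G$ be a graph with $n$ vertices and $m$ edges, and let $k$ be an integer. Then $G$ has an $\alpha$-labeling with critical number $k$ if and only if $n\leqslant m+1$, $G$ is bipartite, and there is a bipartition of $\widehat{G}$ and an arrangement of the vertices of $\widehat{G}$ such that the corresponding biadjacency matrix $A$ is graceful and $A$ has $k+1$ rows. Likewise, $G$ has a complete $\alpha$-labeling with critical number $k$ if and only if $n=m+1$, $G$ is bipartite, and there is a bipartition of $\widehat{G}$ and an arrangement of its vertices such that the corresponding biadjacency matrix $A$ is completely graceful and has $k+1$ rows.
   Context: Graphs are finite, simple and undirected. For a graph $G=(V,E)$ with $m$ edges, a $\beta$-labeling (graceful labeling) is an injective $f:V\to\{0,\ldots,m\}$ such that the edge labels $|f(u)-f(v)|$, $uv\in E$, are distinct. An $\alpha$-labeling with critical number $k\in\{0,\ldots,m\}$ is a $\beta$-labeling $f$ such that for every edge $uv$ either $f(u)\le k<f(v)$ or $f(v)\le k<f(u)$; it is complete if $f$ is bijective. If $G$ has $n\le m+1$ vertices, $\widehat{G}$ is $G$ with $m+1-n$ isolated vertices added. For a bipartite graph with parts $X,Y$ (with the vertices of each part ordered), the biadjacency matrix is the $|X|\times|Y|$ $0$-$1$ matrix whose $(x,y)$ entry is $1$ iff $xy$ is an edge. For a $p\times q$ matrix the box-value of position $(i,j)$ is $p+j-i$; for $c=1,\ldots,p+q-1$ the positions with box-value $c$ form a diagonal. A $0$-$1$ matrix is graceful if every diagonal contains at most one $1$, and completely graceful if every diagonal contains exactly one $1$. *)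

From mathcomp Require Import all_boot all_order all_algebra.
Set Implicit Arguments. Unset Strict Implicit. Unset Printing Implicit Defensive.

Section Graphs.
Variables (T : finType) (e : rel T).

(* A finite simple graph is a symmetric irreflexive relation e on T. *)

Definition edges : {set {set T}} :=
  [set [set xy.1; xy.2] | xy in [set xy : T * T | e xy.1 xy.2]].

Definition nedges : nat := #|edges|.

Definition absdiff (a b : nat) : nat := `|(a%:Z - b%:Z)%R|%N.

Definition beta_labeling (f : T -> nat) : Prop :=
  injective f /\ (forall v, f v <= nedges) /\
  (forall x y x' y', e x y -> e x' y' ->
     absdiff (f x) (f y) = absdiff (f x') (f y') -> [set x; y] = [set x'; y']).

Definition alpha_labeling (k : nat) (f : T -> nat) : Prop :=
  beta_labeling f /\ k <= nedges /\
  (forall u v, e u v -> (f u <= k < f v) \/ (f v <= k < f u)).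

Definition complete_alpha_labeling (k : nat) (f : T -> nat) : Prop :=
  alpha_labeling k f /\ (forall i, i <= nedges -> exists v, f v = i).

Definition bipartite : Prop :=
  exists X : {set T}, forall x y, e x y -> (x \in X) != (y \in X).

Definition ghatV : finType := (T + 'I_(nedges.+1 - #|T|))%type.

Definition ghat_e (x y : ghatV) : bool :=
  match x, y with inl a, inl b => e a b | _, _ => false end.

(* A (bipartition + arrangement) of Ghat with p rows and q columns:
   rows r : 'I_p -> vertices (ordered part X), columns c : 'I_q -> vertices
   (ordered part Y); together they enumerate each vertex of Ghat exactly once,
   and every edge joins X and Y. *)
Definition arrangement (p q : nat) (r : 'I_p -> ghatV) (c : 'I_q -> ghatV) : Prop :=
  injective r /\ injective c /\ (forall i j, r i <> c j) /\
  (forall v, (exists i, r i = v) \/ (exists j, c j = v)) /\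
  (forall x y, ghat_e x y ->
     ((exists i, r i = x) /\ (exists j, c j = y)) \/
     ((exists i, r i = y) /\ (exists j, c j = x))).

Definition biadjacency (p q : nat) (r : 'I_p -> ghatV) (c : 'I_q -> ghatV)
  : 'M[nat]_(p, q) := \matrix_(i, j) (nat_of_bool (ghat_e (r i) (c j))).

End Graphs.

(* box value of position (i,j) (0-based indices; same value as 1-based) *)
Definition box_value (p q : nat) (i : 'I_p) (j : 'I_q) : nat := p + j - i.

Definition diag_ones (p q : nat) (A : 'M[nat]_(p, q)) (c : nat) : nat :=
  #|[set ij : 'I_p * 'I_q | (box_value ij.1 ij.2 == c) && (A ij.1 ij.2 == 1)]|.

Definition zero_one (p q : nat) (A : 'M[nat]_(p, q)) : Prop :=
  forall i j, A i j = 0 \/ A i j = 1.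

Definition graceful_mx (p q : nat) (A : 'M[nat]_(p, q)) : Prop :=
  zero_one A /\ forall c, 1 <= c <= p + q - 1 -> diag_ones A c <= 1.

Definition completely_graceful_mx (p q : nat) (A : 'M[nat]_(p, q)) : Prop :=
  zero_one A /\ forall c, 1 <= c <= p + q - 1 -> diag_ones A c = 1.

From mathcomp Require Import all_boot all_order all_algebra.
From mathcomp Require Import zify.
Set Implicit Arguments. Unset Strict Implicit. Unset Printing Implicit Defensive.

(* Extend an alpha-labeling f with critical number k injectively to the m+1 vertices of
   Ghat (the added isolated vertices take the unused labels) and read the labels as
   positions: the vertices labelled 0..k are the rows, those labelled k+1+j the columns.
   The edge at cell (i, j) then has label k+1+j-i, its box value, so distinct edge labels
   say exactly that the biadjacency matrix is graceful, and conversely positions in a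
   graceful arrangement are an alpha-labeling.  A graceful labeling has m distinct edge
   labels in 1..m, so every diagonal then carries a 1: a complete labeling only adds that
   no isolated vertex was needed, i.e. n = m+1. *)


Lemma absdiffE a b : a <= b -> absdiff a b = b - a.
Proof. by move=> le_ab; rewrite /absdiff distnEr. Qed.

Lemma absdiffC a b : absdiff a b = absdiff b a.
Proof. by rewrite /absdiff distnC. Qed.

Lemma ordered_set2_inj (T : finType) (f : T -> nat) (a b a' b' : T) :
  f a < f b -> f a' < f b' -> [set a; b] = [set a'; b'] -> a = a' /\ b = b'.
Proof.
move=> lt_ab lt_ab' eq_ab.
have : a \in [set a'; b'] by rewrite -eq_ab set21.
have : b \in [set a'; b'] by rewrite -eq_ab set22.
rewrite !inE => /orP[]/eqP eq_b /orP[]/eqP eq_a; subst; first [by [] | lia].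
Qed.

Lemma card_le_bounded_inj (T : finType) (f : T -> nat) m :
  injective f -> (forall v, f v <= m) -> #|T| <= m.+1.
Proof.
move=> f_inj f_le; pose g v : 'I_m.+1 := inord (f v).
have /leq_card : injective g.
  by move=> u v /(congr1 val); rewrite /= !inordK ?ltnS // => /f_inj.
by rewrite card_ord.
Qed.

Lemma card_ge_onto (T : finType) (f : T -> nat) m :
  (forall i, i <= m -> exists v, f v = i) -> m.+1 <= #|T|.
Proof.
move=> f_onto; have /fin_all_exists[g gK] : forall i : 'I_m.+1, exists v, f v = i.
  by move=> i; apply: f_onto; rewrite -ltnS.
have /leq_card : injective g by move=> i j /(congr1 f); rewrite !gK => /val_inj.
by rewrite card_ord.
Qed.

Lemma bij_extension (T : finType) n (g : T -> 'I_n) : injective g ->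
  exists psi : T + 'I_(n - #|T|) -> 'I_n, bijective psi /\ forall v, psi (inl v) = g v.
Proof.
move=> g_inj; have le_Tn : #|T| <= n by rewrite -[n]card_ord (leq_card _ g_inj).
pose U := ~: [set g v | v in T].
have cardU : n - #|T| = #|U|.
  have := cardsC [set g v | v in T]; rewrite card_imset // card_ord => /(congr1 (subn^~ #|T|)).
  by rewrite addKn => <-.
pose psi s := match s with inl v => g v | inr t => enum_val (cast_ord cardU t) end.
exists psi; split=> //; apply: inj_card_bij; last by rewrite card_sum !card_ord; lia.
have notin_g t : psi (inr t) \notin [set g v | v in T].
  by rewrite -in_setC enum_valP.
case=> [u|t] [v|t'] /=.
- by move/g_inj->.
- by move=> eq_g; have := notin_g t'; rewrite /= -eq_g imset_f.
- by move=> eq_g; have := notin_g t; rewrite /= eq_g imset_f.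
- by move/enum_val_inj/cast_ord_inj->.
Qed.

Definition distinct_edge_labels (T : finType) (e : rel T) (f : T -> nat) : Prop :=
  forall x y x' y', e x y -> e x' y' ->
    absdiff (f x) (f y) = absdiff (f x') (f y') -> [set x; y] = [set x'; y'].

Section Labelings.
Variables (T : finType) (e : rel T).
Hypotheses (e_sym : symmetric e) (e_irr : irreflexive e).

Lemma card_oriented_edges (f : T -> nat) : injective f ->
  #|[set xy : T * T | e xy.1 xy.2 && (f xy.1 < f xy.2)]| = nedges e.
Proof.
move=> f_inj; set P := [set xy | _].
rewrite /nedges; have -> : edges e = (fun xy : T * T => [set xy.1; xy.2]) @: P.
  apply/setP => E; apply/imsetP/imsetP => -[[x y] + ->].
  - rewrite inE /= => exy; case: (ltngtP (f x) (f y)) => [lt_xy|lt_yx|/f_inj eq_xy].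
    + by exists (x, y); rewrite ?inE /= ?exy.
    + by exists (y, x); [rewrite inE /= e_sym exy | rewrite setUC].
    + by move: exy; rewrite eq_xy e_irr.
  - by rewrite inE => /andP[exy _]; exists (x, y); rewrite ?inE.
rewrite card_in_imset // => -[x y] [x' y']; rewrite !inE /= => /andP[_ lt_xy] /andP[_ lt_xy'].
by move=> eq_xy; have [-> ->] := ordered_set2_inj lt_xy lt_xy' eq_xy.
Qed.

(* There are [nedges e] oriented edges and their labels are distinct elements of [1, nedges e]. *)
Lemma edge_labels_onto (f : T -> nat) : beta_labeling e f ->
  forall d, 0 < d <= nedges e -> exists x y, [/\ e x y, f x < f y & f y - f x = d].
Proof.
move=> [f_inj [f_le f_dist]] d /andP[d_gt0 d_le].
pose P := [set xy : T * T | e xy.1 xy.2 && (f xy.1 < f xy.2)].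
pose lab (xy : T * T) : 'I_(nedges e).+1 := inord (f xy.2 - f xy.1).
have labE xy : val (lab xy) = f xy.2 - f xy.1.
  by rewrite /= inordK // ltnS; have := f_le xy.2; lia.
have lab_inj : {in P &, injective lab}.
  move=> [x y] [x' y']; rewrite !inE /= => /andP[exy lt_xy] /andP[exy' lt_xy'].
  move/(congr1 val); rewrite !labE /= => eq_lab.
  have eq_xy : [set x; y] = [set x'; y'].
    by apply: f_dist; rewrite // !absdiffE 1?ltnW.
  by have [-> ->] := ordered_set2_inj lt_xy lt_xy' eq_xy.
have labP : lab @: P = [set~ ord0].
  apply/eqP; rewrite eqEcard cardsC1 card_ord card_in_imset // card_oriented_edges //.
  rewrite leqnn andbT; apply/subsetP => _ /imsetP[[x y] + ->].
  by rewrite !inE /= -val_eqE labE => /andP[_ lt_xy]; rewrite subn_eq0 -ltnNge.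
have : inord d \in lab @: P by rewrite labP !inE -val_eqE /= inordK ?ltnS // -lt0n.
case/imsetP => -[x y]; rewrite inE /= => /andP[exy lt_xy] /(congr1 val).
by rewrite labE /= inordK ?ltnS // => eq_d; exists x, y.
Qed.

Lemma alpha_labeling_bipartite k (f : T -> nat) : alpha_labeling e k f -> bipartite e.
Proof.
move=> [_ [_ f_cross]]; exists [set v | f v <= k] => x y /f_cross.
by rewrite !inE => -[] /andP[-> /ltn_geF->].
Qed.

Lemma card_ghatV : #|T| <= (nedges e).+1 -> #|ghatV e| = (nedges e).+1.
Proof. by move=> le_T; rewrite card_sum card_ord; lia. Qed.

End Labelings.

Section RowsColumns.
Variables (V : finType) (p q : nat) (r : 'I_p -> V) (c : 'I_q -> V).

Definition rc_partition : Prop :=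
  injective r /\ injective c /\ (forall i j, r i <> c j) /\
  (forall v, (exists i, r i = v) \/ (exists j, c j = v)).

Definition rc_vertex (s : 'I_p + 'I_q) : V :=
  match s with inl i => r i | inr j => c j end.

Lemma rc_partitionP : rc_partition <-> bijective rc_vertex.
Proof.
split=> [[r_inj [c_inj [r_neq_c rc_cover]]] | [g vK gK]].
  have v_inj : injective rc_vertex.
    case=> [i|j] [i'|j'] /= eq_v.
    - by rewrite (r_inj _ _ eq_v).
    - by case: (r_neq_c _ _ eq_v).
    - by case: (r_neq_c _ _ (esym eq_v)).
    - by rewrite (c_inj _ _ eq_v).
  have /fin_all_exists[g gK] : forall v, exists s, rc_vertex s = v.
    by move=> v; case: (rc_cover v) => -[s <-]; [exists (inl s) | exists (inr s)].
  by exists g => // s; apply: v_inj; rewrite gK.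
have v_inj := can_inj vK.
split; first by move=> i i' /(v_inj (inl i) (inl i')) [].
split; first by move=> j j' /(v_inj (inr j) (inr j')) [].
split; first by move=> i j /(v_inj (inl i) (inr j)).
by move=> v; case E: (g v) => [i|j]; [left; exists i | right; exists j]; rewrite -[v]gK E.
Qed.

Lemma rc_partition_card : rc_partition -> p + q = #|V|.
Proof. by move/rc_partitionP/bij_eq_card; rewrite card_sum !card_ord. Qed.

Lemma rc_partition_pos n : p + q = n -> rc_partition ->
  exists pos : V -> 'I_n,
    [/\ bijective pos, forall i, val (pos (r i)) = i & forall j, val (pos (c j)) = p + j].
Proof.
move=> pq_n; subst n => /rc_partitionP[g vK gK].
exists (unsplit \o g); split=> [|i|j] /=; last 2 first.
- by rewrite (vK (inl i)).
- by rewrite (vK (inr j)).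
by apply: bij_comp; [exists split; [exact: unsplitK | exact: splitK] | exists rc_vertex].
Qed.

End RowsColumns.

Lemma pos_rc_partition (V : finType) p q n (pos : V -> 'I_n) : p + q = n -> bijective pos ->
  exists (r : 'I_p -> V) (c : 'I_q -> V),
    [/\ rc_partition r c, forall i, val (pos (r i)) = i & forall j, val (pos (c j)) = p + j].
Proof.
move=> pq_n; subst n => -[phi posK phiK].
exists (phi \o lshift q), (phi \o @rshift p q); split=> [|i|j] /=; rewrite ?phiK //.
apply/rc_partitionP; apply: (@eq_bij _ _ (phi \o unsplit)) => [|[]//].
by apply: bij_comp; [exists pos | exists split; [exact: unsplitK | exact: splitK]].
Qed.

Definition rc_crossing (T : finType) (e : rel T) p q
    (r : 'I_p -> ghatV e) (c : 'I_q -> ghatV e) : Prop :=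
  forall x y : ghatV e, ghat_e x y ->
    ((exists i, r i = x) /\ (exists j, c j = y)) \/
    ((exists i, r i = y) /\ (exists j, c j = x)).

Lemma arrangementE (T : finType) (e : rel T) p q
    (r : 'I_p -> ghatV e) (c : 'I_q -> ghatV e) :
  arrangement r c <-> rc_partition r c /\ rc_crossing r c.
Proof. by split=> [[? [? [? [? ?]]]] | [[? [? [? ?]]] ?]]. Qed.

Lemma completely_graceful_graceful p q (A : 'M[nat]_(p, q)) :
  completely_graceful_mx A -> graceful_mx A.
Proof. by move=> [A01 A_diag]; split=> // d /A_diag->. Qed.

Section Positions.
Variables (T : finType) (e : rel T) (k q : nat) (f : T -> nat).
Variables (pos : ghatV e -> 'I_(nedges e).+1).
Variables (r : 'I_k.+1 -> ghatV e) (c : 'I_q -> ghatV e).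
Hypotheses (e_sym : symmetric e) (e_irr : irreflexive e).
Hypotheses (rc_size : k.+1 + q = (nedges e).+1) (pos_bij : bijective pos).
Hypotheses (pos_r : forall i, val (pos (r i)) = i).
Hypotheses (pos_c : forall j, val (pos (c j)) = k.+1 + j).
Hypothesis pos_inl : forall v, val (pos (inl v)) = f v.

Let pos_inj : injective pos := bij_inj pos_bij.

Lemma pos_row v (i : 'I_k.+1) : val (pos v) = i -> r i = v.
Proof. by move=> pos_v; apply/pos_inj/val_inj; rewrite pos_r pos_v. Qed.

Lemma pos_col v (j : 'I_q) : val (pos v) = k.+1 + j -> c j = v.
Proof. by move=> pos_v; apply/pos_inj/val_inj; rewrite pos_c pos_v. Qed.

Lemma row_label i x : r i = inl x -> f x = i.
Proof. by rewrite -pos_inl => <-. Qed.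

Lemma col_label j y : c j = inl y -> f y = k.+1 + j.
Proof. by rewrite -pos_inl => <-. Qed.

Lemma label_inj : injective f.
Proof. by move=> u v; rewrite -!pos_inl => /val_inj/pos_inj[]. Qed.

Lemma label_le v : f v <= nedges e.
Proof. by rewrite -ltnS -pos_inl; apply: ltn_ord. Qed.

Lemma edge_cell x y : f x <= k < f y ->
  exists (i : 'I_k.+1) (j : 'I_q), r i = inl x /\ c j = inl y.
Proof.
case/andP => le_xk lt_ky; have lt_j : f y - k.+1 < q by have := label_le y; lia.
exists (Ordinal (le_xk : f x < k.+1)), (Ordinal lt_j); split.
- by apply: pos_row; rewrite pos_inl.
- by apply: pos_col; rewrite pos_inl /=; lia.
Qed.

Lemma rc_crossingE :
  rc_crossing r c <-> (forall u v, e u v -> f u <= k < f v \/ f v <= k < f u).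
Proof.
split=> [cross u v euv | cross [u|t] [v|t'] //= euv].
  have lt_ik (i : 'I_k.+1) : i <= k by rewrite -ltnS.
  case: (cross (inl u) (inl v) euv) => -[[i ri] [j cj]];
    rewrite (row_label ri) (col_label cj) lt_ik; [left | right]; lia.
case: (cross u v euv) => /edge_cell[i [j [ri cj]]]; [left | right]; split;
  by [exists i | exists j].
Qed.

Lemma biadjacency1P i j :
  biadjacency r c i j = 1 <-> exists x y, [/\ e x y, r i = inl x & c j = inl y].
Proof.
rewrite mxE; split=> [|[x [y [exy -> ->]]]]; last by rewrite /= exy.
case: (r i) => [x|//]; case: (c j) => [y|//] /=.
by case exy: (e x y) => // _; exists x, y.
Qed.

Lemma cell_labels i j x y : r i = inl x -> c j = inl y ->
  f x < f y /\ box_value i j = absdiff (f x) (f y).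
Proof.
move=> /row_label-> /col_label->; have := ltn_ord i.
by split; [lia | rewrite absdiffE /box_value; lia].
Qed.

Lemma graceful_biadjacencyE : rc_crossing r c ->
  graceful_mx (biadjacency r c) <-> distinct_edge_labels e f.
Proof.
move/rc_crossingE => cross; split=> [[_ A_diag] | f_dist].
  move=> x y x' y'.
  wlog xy : x y / f x <= k < f y.
    move=> wlog exy; case: (cross x y exy) => [/wlog|yx]; first exact.
    by rewrite absdiffC setUC; apply: wlog; rewrite // e_sym.
  wlog x'y' : x' y' / f x' <= k < f y'.
    move=> wlog exy ex'y'; case: (cross x' y' ex'y') => [/wlog|y'x']; first exact.
    by rewrite [absdiff (f x') _]absdiffC [[set x'; y']]setUC; apply: wlog; rewrite // e_sym.
  move=> exy ex'y'; have [i [j [ri cj]]] := edge_cell xy.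
  have [i' [j' [ri' cj']]] := edge_cell x'y'.
  have [_ <-] := cell_labels ri cj; have [_ <-] := cell_labels ri' cj' => eq_box.
  have box_ij : 0 < box_value i j <= k.+1 + q - 1.
    by rewrite /box_value; have := ltn_ord i; have := ltn_ord j; lia.
  move: (A_diag _ box_ij) => /card_le1_eqP /(_ (i, j) (i', j')).
  rewrite !inE /= eq_box eqxx !(biadjacency1P _ _).2; last 2 first.
  - by exists x', y'.
  - by exists x, y.
  move=> /(_ isT isT) [eq_i eq_j]; subst i' j'.
  by move: ri' cj'; rewrite ri cj => -[<-] [<-].
split=> [i j | d _]; first by rewrite mxE; case: ghat_e; [right | left].
apply/card_le1_eqP => -[i j] [i' j']; rewrite !inE /=.
move=> /andP[/eqP box_ij /eqP/biadjacency1P[x [y [exy ri cj]]]].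
move=> /andP[/eqP box_ij' /eqP/biadjacency1P[x' [y' [ex'y' ri' cj']]]].
have [lt_xy lab_ij] := cell_labels ri cj; have [lt_xy' lab_ij'] := cell_labels ri' cj'.
have eq_xy : [set x; y] = [set x'; y'].
  by apply: f_dist; rewrite // -lab_ij -lab_ij' box_ij box_ij'.
have [eq_x eq_y] := ordered_set2_inj lt_xy lt_xy' eq_xy; subst x' y'.
congr (_, _); apply: ord_inj.
- by rewrite -(row_label ri) -(row_label ri').
- by apply/eqP; rewrite -(eqn_add2l k.+1) -(col_label cj) -(col_label cj').
Qed.

Lemma alpha_labelingE :
  alpha_labeling e k f <-> rc_crossing r c /\ graceful_mx (biadjacency r c).
Proof.
split=> [[[_ [_ f_dist]] [_ f_cross]] | [cross gr]].
  have cross : rc_crossing r c by apply/rc_crossingE.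
  by split=> //; apply/(graceful_biadjacencyE cross).
split; first by split; [exact: label_inj | split; [exact: label_le | exact/graceful_biadjacencyE]].
by split; [lia | exact/rc_crossingE].
Qed.

Lemma complete_alpha_labelingE : complete_alpha_labeling e k f <->
  [/\ #|T| = (nedges e).+1, rc_crossing r c & completely_graceful_mx (biadjacency r c)].
Proof.
split=> [[alpha f_onto] | [card_T cross /completely_graceful_graceful gr]]; last first.
  split; first exact/alpha_labelingE.
  move=> i le_im; have [phi posK phiK] := pos_bij.
  case E: (phi (inord i)) => [v|t]; last by clear E; case: t => t; rewrite card_T subnn.
  by exists v; rewrite -pos_inl -E phiK /= inordK.
have [cross [A01 A_diag]] := alpha_labelingE.1 alpha.
split=> //.
  by apply/anti_leq; rewrite (card_ge_onto f_onto) (card_le_bounded_inj label_inj label_le).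
split=> // d d_rng; apply/eqP; rewrite eqn_leq A_diag //=.
have [beta _] := alpha.
have d_le : 0 < d <= nedges e by move: d_rng; rewrite rc_size subn1.
have [x [y [exy lt_xy <-]]] := edge_labels_onto e_sym e_irr beta d_le.
have /edge_cell[i [j [ri cj]]] : f x <= k < f y.
  case: (rc_crossingE.1 cross x y exy) => // /andP[le_yk lt_kx].
  by have := leq_ltn_trans le_yk (ltn_trans lt_kx lt_xy); rewrite ltnn.
apply/card_gt0P; exists (i, j); rewrite inE /= (biadjacency1P i j).2; last by exists x, y.
by have [_ ->] := cell_labels ri cj; rewrite (absdiffE (ltnW lt_xy)) !eqxx.
Qed.

End Positions.

Section Positioning.
Variables (T : finType) (e : rel T).

Lemma alpha_positions k (f : T -> nat) : alpha_labeling e k f ->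
  exists (pos : ghatV e -> 'I_(nedges e).+1)
         (r : 'I_k.+1 -> ghatV e) (c : 'I_(nedges e - k) -> ghatV e),
    [/\ rc_partition r c, k.+1 + (nedges e - k) = (nedges e).+1, bijective pos,
        (forall i, val (pos (r i)) = i) /\ (forall j, val (pos (c j)) = k.+1 + j)
      & forall v, val (pos (inl v)) = f v].
Proof.
move=> [[f_inj [f_le _]] [le_km _]].
pose g v : 'I_(nedges e).+1 := inord (f v).
have gE v : val (g v) = f v by rewrite /= inordK // ltnS.
have g_inj : injective g by move=> u v /(congr1 val); rewrite !gE => /f_inj.
have [pos [pos_bij pos_inl]] := bij_extension g_inj.
have rc_size : k.+1 + (nedges e - k) = (nedges e).+1 by lia.
have [r [c [part pos_r pos_c]]] := pos_rc_partition rc_size pos_bij.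
by exists pos, r, c; split=> // v; rewrite pos_inl gE.
Qed.

Lemma arrangement_positions k q (r : 'I_k.+1 -> ghatV e) (c : 'I_q -> ghatV e) :
  #|T| <= (nedges e).+1 -> rc_partition r c ->
  k.+1 + q = (nedges e).+1 /\
  exists pos : ghatV e -> 'I_(nedges e).+1,
    [/\ bijective pos, forall i, val (pos (r i)) = i & forall j, val (pos (c j)) = k.+1 + j].
Proof.
move=> le_T part; have rc_size : k.+1 + q = (nedges e).+1.
  by rewrite (rc_partition_card part) card_ghatV.
by split=> //; apply: rc_partition_pos.
Qed.

End Positioning.

Theorem theorem2p6 (T : finType) (e : rel T) (e_sym : symmetric e)
  (e_irr : irreflexive e) (k : nat) :
  ((exists f : T -> nat, alpha_labeling e k f) <->
     (#|T| <= (nedges e).+1 /\ bipartite e /\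
      exists (p q : nat) (r : 'I_p -> ghatV e) (c : 'I_q -> ghatV e),
        arrangement r c /\ graceful_mx (biadjacency r c) /\ p = k.+1))
  /\
  ((exists f : T -> nat, complete_alpha_labeling e k f) <->
     (#|T| = (nedges e).+1 /\ bipartite e /\
      exists (p q : nat) (r : 'I_p -> ghatV e) (c : 'I_q -> ghatV e),
        arrangement r c /\ completely_graceful_mx (biadjacency r c) /\ p = k.+1)).
Proof.
split; split.
- move=> [f alpha]; have [[f_inj [f_le _]] _] := alpha.
  have [pos [r [c [part rc_size pos_bij [pos_r pos_c] pos_inl]]]] := alpha_positions alpha.
  have [cross gr] := (alpha_labelingE e_sym rc_size pos_bij pos_r pos_c pos_inl).1 alpha.
  split; first exact: card_le_bounded_inj f_inj f_le.
  split; first exact: alpha_labeling_bipartite alpha.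
  by exists k.+1, (nedges e - k), r, c; split=> //; apply/arrangementE.
- move=> [le_T [_ [p [q [r [c [/arrangementE[part cross] [gr eq_p]]]]]]]]; subst p.
  have [rc_size [pos [pos_bij pos_r pos_c]]] := arrangement_positions le_T part.
  exists (fun v => val (pos (inl v))).
  exact/(alpha_labelingE e_sym rc_size pos_bij pos_r pos_c (fun=> erefl)).
- move=> [f complete]; have [alpha _] := complete.
  have [pos [r [c [part rc_size pos_bij [pos_r pos_c] pos_inl]]]] := alpha_positions alpha.
  have [card_T cross cgr] := (complete_alpha_labelingE e_sym e_irr rc_size pos_bij
    pos_r pos_c pos_inl).1 complete.
  split=> //; split; first exact: alpha_labeling_bipartite alpha.
  by exists k.+1, (nedges e - k), r, c; split=> //; apply/arrangementE.
- move=> [card_T [_ [p [q [r [c [/arrangementE[part cross] [cgr eq_p]]]]]]]]; subst p.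
  have [rc_size [pos [pos_bij pos_r pos_c]]] := arrangement_positions (eq_leq card_T) part.
  exists (fun v => val (pos (inl v))).
  exact/(complete_alpha_labelingE e_sym e_irr rc_size pos_bij pos_r pos_c (fun=> erefl)).
Qed.
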